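(* Let $M/K$ be a finite extension inside $\bar K$. Then $M/K$ is obtained by nontrivial strong cluster magnification from some subextension $L/K$ if and only if there is an isomorphism ${\rm Gal}(\tilde M/K)\cong A\times B$ with $A$ and $B$ nontrivial groups, under which ${\rm Gal}(\tilde M/M)$ corresponds to $A'\times 1$ for some subgroup $A'\subseteq A$ with $[A:A']>2$.
   Context: $K$ is a perfect field with a fixed algebraic closure $\bar K$; all extensions are finite and contained in $\bar K$. For a finite extension $L/K$, $\tilde L$ denotes its Galois closure in $\bar K$. Definition: $M/K$ is obtained by strong cluster magnification from a subextension $L/K$ (with $K\subseteq L\subseteq M$) if $[L:K]>2$, and there is a finite Galois extension $F/K$ with $\tilde L$ and $F$ linearly disjoint over $K$ and $LF=M$. The number $d=[F:K]$ is the magnification factor; the magnification is nontrivial if $F\neq K$. *)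

From HB Require Import structures.
From mathcomp Require Import all_boot all_order all_algebra all_fingroup all_solvable all_field.
Set Implicit Arguments. Unset Strict Implicit. Unset Printing Implicit Defensive.
Import GRing.Theory.
Local Open Scope ring_scope.

Section Defs.
Variables (F0 : fieldType) (E : splittingFieldType F0).

Definition perfect_subfield (K : {subfield E}) : Prop :=
  forall (p : nat) (x : E), p \in [pchar E] -> x \in K ->
    exists2 y, y \in K & y ^+ p = x.

Definition lin_indep_over (K : {vspace E}) (s : seq E) : Prop :=
  forall c : seq E, size c = size s -> all (fun a => a \in K) c ->
    \sum_(i < size s) c`_i * s`_i = 0 -> all (fun a => a == 0) c.

Definition lin_disjoint (K A B : {subfield E}) : Prop :=
  forall s : seq E, all (fun a => a \in A) s ->
    lin_indep_over K s -> lin_indep_over B s.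

Definition is_gal_closure (K M N : {subfield E}) : Prop :=
  [/\ (M <= N)%VS, galois K N &
      forall N' : {subfield E}, (M <= N')%VS -> galois K N' -> (N <= N')%VS].

Definition nontriv_strong_cluster_magnification (K L M : {subfield E}) : Prop :=
  [/\ (K <= L)%VS, (L <= M)%VS, (2 < \dim_K L)%N &
    exists (Lt F : {subfield E}),
      [/\ is_gal_closure K L Lt, galois K F, F != K,
          lin_disjoint K Lt F & (L * F)%VS = M]].

End Defs.

From HB Require Import structures.
From mathcomp Require Import all_boot all_order all_algebra all_fingroup all_solvable all_field.
Set Implicit Arguments. Unset Strict Implicit. Unset Printing Implicit Defensive.

(* Write G = Gal(Mt/K) and H = Gal(Mt/M). If M = LF with Lt and F linearly
   disjoint over K, then Gal(Mt/F) and Gal(Mt/Lt) are normal in G, generate G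
   because Lt :&: F = K, and meet trivially because the compositum of Lt and F
   contains M, hence Mt: so G = Gal(Mt/F) \x Gal(Mt/Lt), and H, which is
   Gal(Mt/L) :&: Gal(Mt/F), lies in the first factor with index [L : K] > 2.
   Conversely, from G = A \x B with H <= A take F = Fix A and L = Fix (H B);
   the Galois closure of L is the fixed field of the core of H B, which
   contains B, so it meets F in K, and since F/K is Galois this forces linear
   disjointness. Internal and external direct products are interchanged by
   x |-> (divgr x, remgr x). *)

Section DirectProducts.
Local Open Scope group_scope.
Variable gT : finGroupType.
Implicit Types A B G H P : {group gT}.

Lemma dprod_normal_TI A B G :
  A <| G -> B <| G -> A :&: B = 1 -> A * B = G -> A \x B = G.
Proof.
move=> /andP[sAG nAG] /andP[sBG nBG] tiAB defG; rewrite -defG dprodE //.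
apply/commG1P/trivgP; rewrite -tiAB setIC commg_subI // subsetI subxx.
  exact: subset_trans nAG.
exact: subset_trans nBG.
Qed.

Lemma indexg_dprod A B G P :
  A \x B = G -> B \subset P -> P \subset G -> #|A : P :&: A| = #|G : P|.
Proof.
move=> defG sBP sPG; have [_ defAB _ tiAB] := dprodP defG.
have defP : (P :&: A) * B = P by rewrite group_modr // defAB (setIidPl sPG).
have tiPAB : (P :&: A) :&: B = 1 by apply/trivgP; rewrite -tiAB setSI ?subsetIr.
rewrite -!divgS ?subsetIr // -defAB -{1}defP !TI_cardMg //.
by rewrite divnMr ?cardG_gt0.
Qed.

End DirectProducts.

Section DprodProjection.
Local Open Scope group_scope.
Variables (gT : finGroupType) (A B G : {group gT}).
Hypothesis defG : A \x B = G.

Definition dprod_proj x := (divgr A B x, remgr A B x).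

Lemma dprod_projM : {in G &, {morph dprod_proj : x y / x * y}}.
Proof.
have [_ defAB cAB tiAB] := dprodP defG; have [nsAG _] := dprod_normal2 defG.
have complB : B \in [complements to A in G] by apply/complP.
by move=> x y Gx Gy; rewrite /dprod_proj (divgrM complB) ?(remgrM complB).
Qed.

Canonical dprod_proj_morphism := Morphism dprod_projM.

Lemma injm_dprod_proj : 'injm dprod_proj_morphism.
Proof.
apply/injmP=> x y _ _ [eq_div eq_rem].
by rewrite (divgr_eq A B x) (divgr_eq A B y) eq_div eq_rem.
Qed.

Lemma morphim_dprod_proj (H : {set gT}) :
  H \subset A -> dprod_proj_morphism @* H = setX H 1.
Proof.
move=> sHA; have [_ defAB _ _] := dprodP defG.
have sHG : H \subset G by rewrite -defAB (subset_trans sHA) ?mulG_subl.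
rewrite morphimEsub //; apply/setP=> -[a b]; rewrite !inE /=.
apply/imsetP/andP=> [[x Hx [-> ->]] | [Ha /eqP->]].
  by rewrite divgr_id ?remgr1 ?(subsetP sHA) ?eqxx.
by exists a; rewrite // /dprod_proj divgr_id ?remgr1 ?(subsetP sHA).
Qed.

Lemma im_dprod_proj : dprod_proj_morphism @* G = setX A B.
Proof.
have [_ defAB _ tiAB] := dprodP defG.
apply/setP=> -[a b]; apply/morphimP/setXP=> [[x _ Gx [-> ->]] | [Aa Bb]].
  by rewrite -defAB in Gx; rewrite mem_divgr ?mem_remgr.
exists (a * b); rewrite ?inE -?defAB ?mem_mulg //.
by rewrite [dprod_proj_morphism _]/= /dprod_proj divgrMid ?remgrMid.
Qed.

End DprodProjection.

Section Magnification.
Local Open Scope group_scope.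
Variable gT : finGroupType.

Definition dprod_magnification (G H : {set gT}) : Prop :=
  exists A B : {group gT},
    [/\ A \x B = G, H \subset A, B :!=: 1 & (2 < #|A : H|)%N].

Definition setX_magnification (G H : {set gT}) : Prop :=
  exists (aT bT : finGroupType) (A A' : {group aT}) (B : {group bT})
         (f : {morphism G >-> (aT * bT)%type}),
    [/\ isom G (setX A B) f, A :!=: 1 /\ B :!=: 1, f @* H = setX A' 1,
        A' \subset A & (2 < #|A : A'|)%N].

Lemma dprod_setX_magnification (G H : {group gT}) :
  dprod_magnification G H -> setX_magnification G H.
Proof.
move=> [A [B [defG sHA ntB idxH]]].
exists gT, gT, A, H, B, (dprod_proj_morphism defG); split=> //.
- by apply/isomP; rewrite injm_dprod_proj im_dprod_proj.
- by split=> //; apply: contraTneq (ltnW idxH) => ->; rewrite indexg_gt1 sub1G.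
- exact: morphim_dprod_proj.
Qed.

Lemma setX_dprod_magnification (G H : {group gT}) :
  H \subset G -> setX_magnification G H -> dprod_magnification G H.
Proof.
move=> sHG [aT [bT [A [A' [B [f [isoG [ntA ntB] fH sA'A idxA']]]]]]].
have [injf imf] := isomP isoG; pose g := invm injf.
have sA1 : setX A 1 \subset f @* G by rewrite imf setXS ?sub1G.
have s1B : setX 1 B \subset f @* G by rewrite imf setXS ?sub1G.
have defH : g @* setX A' 1 = H by rewrite -fH; apply: morphim_invm.
exists (g @* setX A 1)%G, (g @* setX 1 B)%G; split.
- have sABf : setX A B \subset f @* G by rewrite imf.
  rewrite (injm_dprod sABf (injm_invm injf) (setX_dprod A B)) -imf.
  exact: im_invm.
- by rewrite -defH morphimS ?setXS.
- rewrite /= morphim_injm_eq1 ?injm_invm // -morphim_pair1g.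
  by rewrite morphim_injm_eq1 ?injm_pair1g ?subsetT.
- have idxX : #|setX A [1 bT] : setX A' [1 bT]| = #|A : A'|.
    by rewrite -!morphim_pairg1 index_injm ?injm_pairg1 ?subsetT.
  by rewrite -defH index_injm ?injm_invm //= idxX.
Qed.

End Magnification.

Section GaloisCorrespondence.
Import GRing.Theory.
Local Open Scope ring_scope.
Variables (F0 : fieldType) (E : splittingFieldType F0).
Implicit Types (K X Y Mt : {subfield E}).

Lemma galvv Mt : ('Gal(Mt / Mt))%g = 1%g.
Proof.
apply/trivgP/subsetP=> x galx; rewrite inE; apply/gal_eqP=> a Mta.
by rewrite gal_id (fixed_gal (subvv Mt) galx Mta).
Qed.

Lemma fixedFieldU Mt (A B : {set gal_of Mt}) :
  fixedField (A :|: B) = (fixedField A :&: fixedField B)%VS.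
Proof.
apply/eqP; rewrite eqEsubv subv_cap !fixedFieldS ?subsetUl ?subsetUr //=.
apply/subvP=> a /memv_capP[/mem_fixedFieldP[Mta fixA] /mem_fixedFieldP[_ fixB]].
by apply/fixedFieldP=> // x /setUP[/fixA | /fixB].
Qed.

Lemma gal_prodv Mt X Y : (X <= Mt)%VS -> (Y <= Mt)%VS ->
  ('Gal(Mt / X * Y))%g = ('Gal(Mt / X) :&: 'Gal(Mt / Y))%g.
Proof.
move=> sXMt sYMt; have sXYMt : (X * Y <= Mt)%VS by apply: prodv_sub.
apply/eqP; rewrite eqEsubset subsetI !galS ?field_subvMr ?field_subvMl //=.
rewrite galois_connection // prodv_sub //.
  by rewrite -(galois_connection _ sXMt) subsetIl.
by rewrite -(galois_connection _ sYMt) subsetIr.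
Qed.

Lemma galois_capv K X Y : galois K X -> galois K Y -> galois K (X :&: Y)%AS.
Proof.
case/and3P=> sKX _ nKX /and3P[sKY sepKY nKY].
rewrite /galois /= subv_cap sKX sKY (separableSr (capvSr _ _) sepKY) /=.
apply/forall_inP=> f autKf.
rewrite eqEdim limg_dim_eq ?(eqP (AEnd_lker0 _)) ?capv0 // leqnn andbT.
apply/subvP=> _ /memv_imgP[a /memv_capP[Xa Ya] ->].
rewrite memv_cap -(eqP (forall_inP nKX f autKf)) -(eqP (forall_inP nKY f autKf)).
by rewrite !memv_img.
Qed.

Variables (K Mt : {subfield E}).
Hypothesis galKMt : galois K Mt.

Lemma fixedField_gal X : (K <= X <= Mt)%VS -> fixedField ('Gal(Mt / X))%g = X.
Proof. by move=> sKXMt; apply/galois_fixedField/(galoisS sKXMt). Qed.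

Lemma gal_inj X Y : (K <= X <= Mt)%VS -> (K <= Y <= Mt)%VS ->
  ('Gal(Mt / X))%g = ('Gal(Mt / Y))%g -> X = Y :> {vspace E}.
Proof.
by move=> sKXMt sKYMt eqXY; rewrite -(fixedField_gal sKXMt) eqXY fixedField_gal.
Qed.

Lemma gal_capv X Y : (K <= X <= Mt)%VS -> (K <= Y <= Mt)%VS ->
  ('Gal(Mt / X :&: Y))%g = ('Gal(Mt / X) <*> 'Gal(Mt / Y))%g.
Proof.
move=> sKXMt sKYMt; have := gal_generated ('Gal(Mt / X) :|: 'Gal(Mt / Y))%g.
by rewrite fixedFieldU !fixedField_gal.
Qed.

Lemma gal_closure_gcore (P : {group gal_of Mt}) :
  P \subset ('Gal(Mt / K))%g ->
  is_gal_closure K (fixedField P) (fixedField (gcore P 'Gal(Mt / K)))%g.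
Proof.
move=> sPG; split; first exact/fixedFieldS/gcore_sub.
  exact: normal_fixedField_galois (gcore_normal sPG).
move=> N sLN galKN; have galKNMt := galois_capv galKN galKMt.
have sKNMt : (K <= N :&: Mt <= Mt)%VS.
  by rewrite capvSr andbT; case/and3P: galKNMt.
have nsNG : ('Gal(Mt / N :&: Mt) <| 'Gal(Mt / K))%g.
  by apply: normalField_normal sKNMt _; case/and3P: galKNMt.
have sNcore : ('Gal(Mt / N :&: Mt) \subset gcore P 'Gal(Mt / K))%g.
  apply: gcore_max (normal_norm nsNG).
  by rewrite -(gal_fixedField P) galS // subv_cap sLN fixedField_bound.
apply: subv_trans (fixedFieldS sNcore) _.
by rewrite (fixedField_gal sKNMt) capvSl.
Qed.

End GaloisCorrespondence.

Section LinearDisjointness.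
Import GRing.Theory.
Local Open Scope ring_scope.
Variables (F0 : fieldType) (E : splittingFieldType F0).

Definition indep_over (K : {vspace E}) n (s : 'I_n -> E) : Prop :=
  forall c : 'I_n -> E, (forall i, c i \in K) -> \sum_i c i * s i = 0 ->
    forall i, c i = 0.

Lemma lin_indep_overE (K : {vspace E}) (s : seq E) :
  lin_indep_over K s <-> indep_over K (fun i : 'I_(size s) => s`_i).
Proof.
split=> [indK c Kc relc i | indK c size_c Kc relc].
  pose cs := [seq c k | k <- enum 'I_(size s)].
  have nth_cs (j : 'I_(size s)) : cs`_j = c j.
    by rewrite (nth_map j) ?size_enum_ord // nth_ord_enum.
  have size_cs : size cs = size s by rewrite size_map size_enum_ord.
  have Kcs : all (fun a => a \in K) cs by apply/allP=> _ /mapP[k _ ->].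
  have relcs : \sum_(j < size s) cs`_j * s`_j = 0.
    by under eq_bigr => j _ do rewrite nth_cs.
  have /(all_nthP 0)/(_ i) := indK cs size_cs Kcs relcs.
  by rewrite size_cs nth_cs ltn_ord => /(_ isT)/eqP.
apply/(all_nthP 0)=> i; rewrite size_c => lt_i; apply/eqP.
have Kc' (j : 'I_(size s)) : c`_j \in K by apply: (all_nthP 0 Kc); rewrite size_c.
exact: (indK _ Kc' relc (Ordinal lt_i)).
Qed.

Lemma lin_disjoint_capv (K X Y : {subfield E}) :
  (K <= X)%VS -> (K <= Y)%VS -> lin_disjoint K X Y -> (X :&: Y)%VS = K.
Proof.
move=> sKX sKY disjXY; apply/eqP; rewrite eqEsubv subv_cap sKX sKY !andbT.
apply/subvP=> x /memv_capP[Xx Yx]; apply: contraTT isT => notKx.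
have sum2 (c0 c1 : E) :
    \sum_(i < size [:: 1; x]) [:: c0; c1]`_i * [:: 1; x]`_i = c0 + c1 * x.
  by rewrite big_ord_recr big_ord_recr big_ord0 /= add0r mulr1.
have indK : lin_indep_over K [:: 1; x].
  move=> [|c0 [|c1 []]] // _ /and3P[Kc0 Kc1 _]; rewrite sum2 => rel.
  have [c1_0 | nz_c1] := eqVneq c1 0.
    by move: rel; rewrite c1_0 mul0r addr0 => ->; rewrite /= !eqxx.
  have def_x : x = - c0 / c1.
    apply: (mulIf nz_c1); rewrite divfK // mulrC.
    by apply/eqP; rewrite -addr_eq0 addrC rel.
  by move: notKx; rewrite def_x rpredM ?rpredN ?rpredV.
have X1x : all (fun a => a \in X) [:: 1; x] by rewrite /= mem1v Xx.
have /(_ [:: x; -1] erefl) := disjXY _ X1x indK.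
rewrite /= Yx rpredN mem1v sum2 mulN1r subrr oppr_eq0 oner_eq0 andbF.
by move/(_ isT erefl).
Qed.

Lemma normalField_memv_gal (K F : {subfield E}) x a :
  (K <= F)%VS -> normalField K F -> x \in ('Gal({:E} / K))%g -> a \in F ->
  x a \in F.
Proof.
move=> sKF nKF galx Fa; rewrite gal_kAut ?subvf // in galx.
have sKFE : (K <= F <= {:E})%VS by rewrite sKF subvf.
have /andP[_ /eqP <-] := normalField_kAut sKFE nKF galx.
exact: memv_img.
Qed.

Section GaloisDescent.
Variables (K Lt F : {subfield E}).
Hypotheses (galLt : galois Lt {:E}) (sKLt : (K <= Lt)%VS).
Hypotheses (sKF : (K <= F)%VS) (nKF : normalField K F).
Hypothesis capLtF : (Lt :&: F)%VS = K.

Let G := ('Gal({:E} / Lt))%g.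

Let gal_memv x a : x \in G -> a \in F -> x a \in F.
Proof.
by move=> Gx; apply: normalField_memv_gal sKF nKF (subsetP (galS _ sKLt) x Gx).
Qed.

Let fixed_memv a : a \in F -> (forall x, x \in G -> x a = a) -> a \in K.
Proof.
move=> Fa fixa; rewrite -capLtF memv_cap Fa andbT.
by rewrite -(galois_fixedField galLt); apply/fixedFieldP; rewrite ?memvf.
Qed.

Lemma indep_over_descent n (s : 'I_n -> E) :
  (forall i, s i \in Lt) -> indep_over K s -> indep_over F s.
Proof.
(* Artin's argument: an F-relation of minimal support, scaled to have a 1 in
   position j, is fixed by Gal(E/Lt), so its coefficients lie in Lt :&: F = K. *)
move=> Lts indK; suff indF (m : nat) c : (forall i, c i \in F) ->
    \sum_i c i * s i = 0 -> (#|[set i | c i != 0%R]| <= m)%N -> forall i, c i = 0.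
  by move=> c Fc relc; apply: indF Fc relc (leqnn _).
elim: m c => [|m IHm] c Fc relc.
  rewrite leqn0 => /eqP/card0_eq supp0 i.
  by have := supp0 i; rewrite !inE => /negbFE/eqP.
move=> supp_c j; apply: contraTeq isT => nz_cj.
pose d i := c i / c j.
have Fd i : d i \in F by rewrite rpredM ?rpredV.
have reld : \sum_i d i * s i = 0.
  by under eq_bigr => i _ do rewrite /d mulrAC; rewrite -mulr_suml relc mul0r.
have fixd x i : x \in G -> x (d i) = d i.
  move=> Gx; pose e k := d k - x (d k).
  suff /(_ i)/eqP : forall k, e k = 0 by rewrite subr_eq0 => /eqP.
  apply: IHm => [k | | ].
  - by rewrite rpredB ?gal_memv.
  - rewrite (eq_bigr (fun k => d k * s k - x (d k * s k))) => [|k _]; last first.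
      by rewrite mulrBl [x (_ * s k)]rmorphM /= (fixed_gal (subvf Lt) Gx (Lts k)).
    by rewrite sumrB -rmorph_sum reld rmorph0 subrr.
  - have supp_e : [set k | e k != 0] \subset [set k | c k != 0] :\ j.
      apply/subsetP=> k; rewrite !inE; have [-> | _] /= := eqVneq k j.
        by rewrite /e /d divff // rmorph1 subrr eqxx.
      by apply: contra_neq => ck0; rewrite /e /d ck0 mul0r rmorph0 subrr.
    rewrite (leq_trans (subset_leq_card supp_e)) // -ltnS.
    by rewrite (cardsD1 j) inE nz_cj in supp_c.
have /(_ j)/eqP := indK d (fun i => fixed_memv (Fd i) (fixd^~ i)) reld.
by rewrite /d divff // oner_eq0.
Qed.

End GaloisDescent.

Lemma capv_lin_disjoint (K Lt F : {subfield E}) :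
  galois K {:E} -> galois K F -> (K <= Lt)%VS -> (Lt :&: F)%VS = K ->
  lin_disjoint K Lt F.
Proof.
move=> galK /and3P[sKF _ nKF] sKLt capLtF s Lts /lin_indep_overE indK.
have galLt : galois Lt {:E} by apply: galoisS galK; rewrite sKLt subvf.
apply/lin_indep_overE/(indep_over_descent galLt sKLt sKF nKF capLtF _ indK) => i.
exact: (all_nthP 0 Lts).
Qed.

End LinearDisjointness.

Section ClusterMagnification.
Import GRing.Theory.
Variables (F0 : fieldType) (E : splittingFieldType F0).
Implicit Types K L M Mt : {subfield E}.

Lemma cluster_magnification_dprod K L M Mt :
  is_gal_closure K M Mt -> nontriv_strong_cluster_magnification K L M ->
  dprod_magnification ('Gal(Mt / K))%g ('Gal(Mt / M))%g.
Proof.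
move=> [sMMt galKMt minMt] [sKL sLM dimL [Lt [F [[sLLt galKLt minLt] galKF ntF]]]].
move=> disj defM.
have [[sKF _ nKF] [sKLt _ nKLt]] := (and3P galKF, and3P galKLt).
have sLMt := subv_trans sLM sMMt.
have sKLtMt : (K <= Lt <= Mt)%VS by rewrite sKLt minLt.
have sKFMt : (K <= F <= Mt)%VS.
  by rewrite sKF (subv_trans _ sMMt) // -defM field_subvMl.
have nsA := normalField_normal sKFMt nKF.
have nsB := normalField_normal sKLtMt nKLt.
have defAB : ('Gal(Mt / F) * 'Gal(Mt / Lt))%g = ('Gal(Mt / K))%g.
  rewrite -norm_joinEr ?(subset_trans (normal_sub nsB) (normal_norm nsA)) //.
  by rewrite -(gal_capv galKMt) // capvC (lin_disjoint_capv sKLt sKF disj).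
have tiAB : ('Gal(Mt / F) :&: 'Gal(Mt / Lt))%g = 1%g.
  pose I := ('Gal(Mt / F) :&: 'Gal(Mt / Lt))%G.
  have galKI : galois K (fixedField I) :=
    normal_fixedField_galois galKMt (normalI nsA nsB).
  have sMI : (M <= fixedField I)%VS.
    rewrite -defM prodv_sub // ?(subv_trans sLLt) //.
      by rewrite -{1}(fixedField_gal galKMt sKLtMt) fixedFieldS ?subsetIr.
    by rewrite -{1}(fixedField_gal galKMt sKFMt) fixedFieldS ?subsetIl.
  have := minMt _ sMI galKI.
  by rewrite -(galois_connection _ (subvv Mt)) galvv => /trivgP.
have dprodG := dprod_normal_TI nsA nsB tiAB defAB.
exists ('Gal(Mt / F))%G, ('Gal(Mt / Lt))%G; split=> //.
- by apply: galS; rewrite -defM field_subvMl.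
- apply: contra_neq ntF => trivB; apply/val_inj/(gal_inj galKMt) => //.
    by rewrite subvv; case/and3P: galKMt.
  by rewrite -defAB /= trivB mulg1.
- have sFMt : (F <= Mt)%VS by case/andP: sKFMt.
  rewrite -defM gal_prodv // (indexg_dprod dprodG) ?galS //.
  by rewrite -(dim_fixed_galois galKMt) ?galS // (fixedField_gal galKMt) ?sKL.
Qed.

Lemma dprod_cluster_magnification K M Mt :
  galois K {:E} -> (K <= M)%VS -> is_gal_closure K M Mt ->
  dprod_magnification ('Gal(Mt / K))%g ('Gal(Mt / M))%g ->
  exists L, nontriv_strong_cluster_magnification K L M.
Proof.
move=> galK sKM [sMMt galKMt _] [A [B [dprodG sHA ntB idxH]]].
have [sKMt _ _] := and3P galKMt.
have [nsAG nsBG] := dprod_normal2 dprodG.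
have [_ defAB _ tiAB] := dprodP dprodG.
have sHG : ('Gal(Mt / M) \subset 'Gal(Mt / K))%g by apply: galS.
pose P := ('Gal(Mt / M) <*> B)%G.
have sBP : (B \subset P)%g by apply: joing_subr.
have sPG : (P \subset 'Gal(Mt / K))%g by rewrite join_subG sHG normal_sub.
have capPA : (P :&: A)%g = ('Gal(Mt / M))%g.
  rewrite /= norm_joinEl ?(subset_trans sHG (normal_norm nsBG)) //.
  by rewrite -group_modl // setIC tiAB mulg1.
have closLt := gal_closure_gcore galKMt sPG; have [_ galKLt _] := closLt.
have galKF := normal_fixedField_galois galKMt nsAG.
have [[sKLt _ _] [sKF _ _]] := (and3P galKLt, and3P galKF).
have sKL : (K <= fixedField P)%VS by rewrite -galois_connection.
exists (fixedField P); split=> //.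
- by rewrite -(fixedField_gal galKMt (X := M)) ?sKM // fixedFieldS ?joing_subl.
- by rewrite (dim_fixed_galois galKMt sPG) -(indexg_dprod dprodG sBP sPG) capPA.
exists (fixedField (gcore P 'Gal(Mt / K)))%g, (fixedField A); split=> //.
- apply: contra_neq ntB => defF; apply/trivgP.
  have defA : A :=: ('Gal(Mt / K))%g by rewrite -defF gal_fixedField.
  by rewrite -tiAB subsetI subxx defA normal_sub.
- apply: (capv_lin_disjoint galK galKF sKLt).
  set Lt := fixedField _; set F := fixedField A.
  have sKLtMt : (K <= Lt <= Mt)%VS by rewrite sKLt fixedField_bound.
  have sKFMt : (K <= F <= Mt)%VS by rewrite sKF fixedField_bound.
  have sKcapMt : (K <= Lt :&: F <= Mt)%VS.
    by rewrite subv_cap sKLt sKF (subv_trans (capvSr _ _)) ?fixedField_bound.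
  apply: (gal_inj galKMt sKcapMt); first by rewrite subvv.
  rewrite (gal_capv galKMt sKLtMt sKFMt) !gal_fixedField.
  have sBcore : (B \subset gcore P 'Gal(Mt / K))%g.
    exact: gcore_max sBP (normal_norm nsBG).
  have sGjoin : ('Gal(Mt / K) \subset gcore P 'Gal(Mt / K) <*> A)%g.
    rewrite -{1}defAB mul_subG ?joing_subr //.
    exact: subset_trans sBcore (joing_subl _ _).
  apply/eqP; rewrite eqEsubset join_subG (subset_trans (gcore_sub _ _) sPG).
  by rewrite (normal_sub nsAG) sGjoin.
- have sLFMt : (fixedField P * fixedField A <= Mt)%VS.
    by rewrite prodv_sub ?fixedField_bound.
  apply: (gal_inj galKMt); rewrite ?sKM ?sLFMt ?(subv_trans sKL) ?field_subvMr //.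
  by rewrite gal_prodv ?fixedField_bound // !gal_fixedField capPA.
Qed.

End ClusterMagnification.

Theorem theorem4p6 (F0 : fieldType) (E : splittingFieldType F0)
    (K M Mt : {subfield E}) :
  perfect_subfield K -> galois K fullv -> (K <= M)%VS ->
  is_gal_closure K M Mt ->
  (exists L : {subfield E}, nontriv_strong_cluster_magnification K L M) <->
  (exists (aT bT : finGroupType) (A A' : {group aT}) (B : {group bT})
          (f : {morphism ('Gal(Mt / K))%g >-> (aT * bT)%type}),
     [/\ isom ('Gal(Mt / K))%g (setX A B) f,
         A :!=: 1%g /\ B :!=: 1%g,
         (f @* 'Gal(Mt / M))%g = setX A' [1 bT]%g,
         A' \subset A & (2 < #|A : A'|%g)%N ]).
Proof.
(* K need not be perfect: separability is part of [galois K fullv]. *)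
move=> _ galK sKM closMt.
have sHG : ('Gal(Mt / M) \subset 'Gal(Mt / K))%g by apply: galS.
split=> [[L /(cluster_magnification_dprod closMt)] | ].
  exact: dprod_setX_magnification.
by move/(setX_dprod_magnification sHG); apply: dprod_cluster_magnification.
Qed.
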